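(* Let $n\ge 2$ and let $\mathcal{G}\subseteq 2^{[n]}$ be an IU-family, i.e. $G\cap G'\neq\emptyset$ and $G\cup G'\neq[n]$ for all $G,G'\in\mathcal{G}$. Then $\beta(\mathcal{G})\le 2^{n-4}$.
   Context: $[n]=\{1,\dots,n\}$ and $2^{[n]}$ is the family of all subsets of $[n]$. For $\mathcal{F}\subseteq 2^{[n]}$ and distinct $i,j\in[n]$, let $\mathcal{F}(i,\bar{j})=\{F\setminus\{i\}: F\in\mathcal{F},\ F\cap\{i,j\}=\{i\}\}$. The sturdiness of $\mathcal{F}$ is $\beta(\mathcal{F})=\min_{1\le i\neq j\le n}|\mathcal{F}(i,\bar{j})|$. *)

From mathcomp Require Import all_boot.
Set Implicit Arguments. Unset Strict Implicit. Unset Printing Implicit Defensive.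

Definition section_ij (n : nat) (F : {set {set 'I_n}}) (i j : 'I_n) : {set {set 'I_n}} :=
  [set G :\ i | G in F & (G :&: [set i; j]) == [set i]].

(* sturdiness: min over ordered pairs i <> j of |F(i, \bar j)|.
   The default 2^n of the min is never reached for n >= 2 (pairs exist)
   and is an upper bound for every |F(i,\bar j)| anyway. *)
Definition sturdiness (n : nat) (F : {set {set 'I_n}}) : nat :=
  \big[minn/2 ^ n]_(p : 'I_n * 'I_n | p.1 != p.2) #|section_ij F p.1 p.2|.

Definition IU_family (n : nat) (F : {set {set 'I_n}}) : Prop :=
  forall G G', G \in F -> G' \in F -> G :&: G' != set0 /\ G :|: G' != setT.

(* Fix i <> j and let Q be the subcube of sets X with X ∩ {i,j} = {i}, of
   dimension n - 2; put N = 2^(n-2).  The members of G lying in Q belong to both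
   the up-closure U and the down-closure D of G.  The complements of the members
   of G meeting {i,j} in {j} also lie in Q, but the IU property keeps them out of
   U ∪ D.  Inside Q, Harris–Kleitman gives N |U ∩ D ∩ Q| <= |U ∩ Q| |D ∩ Q|, so
   the room left in Q outside U ∪ D is at most (N - |U ∩ Q|)(N - |D ∩ Q|) / N,
   and AM-GM turns this into 16 |G(i,j̄)| |G(j,ī)| <= N^2.  Hence β(G) <= N/4. *)

From mathcomp Require Import all_boot order zify.
Set Implicit Arguments. Unset Strict Implicit. Unset Printing Implicit Defensive.

Lemma bigminn_le_cond (I : finType) (P : pred I) (F : I -> nat) x j :
  P j -> \big[minn/x]_(i | P i) F i <= F j.
Proof.
by move=> Pj; have := @Order.TotalTheory.bigmin_le_cond _ nat _ x j P F Pj; rewrite minEnat.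
Qed.

Lemma chebyshev2 u0 u1 d0 d1 : u0 <= u1 -> d1 <= d0 ->
  2 * (u0 * d0 + u1 * d1) <= (u0 + u1) * (d0 + d1).
Proof. by move=> /subnKC <- /subnKC <-; nia. Qed.

Lemma AGM_subn u N : 4 * (u * (N - u)) <= N ^ 2.
Proof.
case: (leqP u N) => [/subnKC {2}<-|/ltnW]; first exact: nat_AGM2.
by rewrite -subn_eq0 => /eqP->; rewrite muln0.
Qed.

Lemma leq_mul_compl N u d v w c : u <= N -> d <= N -> c + v <= N ->
  v + w = u + d -> N * w <= u * d -> N * c <= (N - u) * (N - d).
Proof. by move=> *; nia. Qed.

Lemma leq_16mul_sqr N u d v w c : 0 < N -> u <= N -> d <= N -> c + v <= N ->
  v + w = u + d -> N * w <= u * d -> 16 * (c * w) <= N ^ 2.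
Proof.
move=> N0 uN dN cvN vw Nw.
have Nc := leq_mul_compl uN dN cvN vw Nw.
have AGM := leq_mul (AGM_subn u N) (AGM_subn d N).
rewrite -(@leq_pmul2l (N ^ 2)) ?expn_gt0 ?N0 //.
set p := N - u in Nc AGM; set q := N - d in Nc AGM; clearbody p q.
(* N^2 * 16cw = 16 (Nc)(Nw) <= 16 (pq)(ud) = (4up)(4dq) <= N^4 *)
have := leq_mul Nc Nw; nia.
Qed.

Section SetLemmas.
Variable T : finType.
Implicit Types (A X K : {set T}) (x : T).

Lemma setI_set1 A x : A :&: [set x] = if x \in A then [set x] else set0.
Proof.
by case: (boolP (x \in A)) => xA; apply/setP => y; rewrite !inE;
  case: (eqVneq y x) => [->|_]; rewrite ?xA ?(negbTE xA) ?andbF ?andbT.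
Qed.

Lemma setIU1r X K x :
  X :&: (x |: K) = if x \in X then x |: (X :&: K) else X :&: K.
Proof.
apply/setP => y; case: (boolP (x \in X)) => xX; rewrite !inE;
  by case: (eqVneq y x) => [->|_] /=; rewrite ?xX ?(negbTE xX).
Qed.

Lemma setU1I X K x : x \notin K -> (x |: X) :&: K = X :&: K.
Proof. by move=> xK; rewrite setIUl disjoint_setI0 ?disjoints1 // set0U. Qed.

Lemma setD1I X K x : x \notin K -> (X :\ x) :&: K = X :&: K.
Proof.
move=> xK; rewrite setIDAC; apply/setDidPl.
by rewrite disjoint_sym disjoints1 inE negb_and xK orbT.
Qed.

End SetLemmas.

Section Subcube.
Variable T : finType.
Implicit Types (K L X Y : {set T}) (P U D : {set {set T}}).

Definition cube K L := [set X | X :&: K == L].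

Lemma cube_setT L : cube setT L = [set L].
Proof. by apply/setP => X; rewrite !inE setIT. Qed.

Lemma card_cube_le K L : #|cube K L| <= 2 ^ #|~: K|.
Proof.
have inj_free : {in cube K L &, injective (fun X => X :\: K)}.
  move=> X Y; rewrite !inE => /eqP XK /eqP YK XYK.
  by rewrite -(setID X K) -(setID Y K) XK YK XYK.
rewrite -card_powerset -(card_in_imset inj_free).
apply/subset_leq_card/subsetP => _ /imsetP[X _ ->].
by rewrite powersetE setDE subsetIr.
Qed.

Lemma setC_cube K L X : X \in cube K L -> ~: X \in cube K (K :\: L).
Proof. by rewrite !inE => /eqP <-; rewrite setIC -setDE setDIr setDv setU0. Qed.

Lemma cubeU1_notin K L x : x \notin K -> x \notin L ->
  cube (x |: K) L = [set X in cube K L | x \notin X].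
Proof.
move=> xK xL; apply/setP => X; rewrite !inE setIU1r.
case: (boolP (x \in X)) => xX; rewrite ?andbF ?andbT //.
by apply/negbTE; apply: contra xL => /eqP <-; rewrite setU11.
Qed.

Lemma cubeU1_in K L x : x \notin K -> L \subset K ->
  cube (x |: K) (x |: L) = [set X in cube K L | x \in X].
Proof.
move=> xK LK; have xL : x \notin L by apply: contra xK; apply/subsetP.
apply/setP => X; rewrite !inE setIU1r.
have xXK : x \notin X :&: K by rewrite inE negb_and xK orbT.
case: (boolP (x \in X)) => xX; rewrite ?andbF ?andbT; last first.
  by apply/negbTE; apply: contra xX => /eqP/setP/(_ x); rewrite setU11 inE => /andP[].
by apply/eqP/eqP => [E|-> //]; rewrite -(setU1K xXK) E setU1K.
Qed.

Lemma cardsI_cubeU1 P K L x : x \notin K -> L \subset K ->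
  #|P :&: cube K L| = #|P :&: cube (x |: K) L| + #|P :&: cube (x |: K) (x |: L)|.
Proof.
move=> xK LK; have xL : x \notin L by apply: contra xK; apply/subsetP.
rewrite (cubeU1_notin xK xL) (cubeU1_in xK LK) addnC.
rewrite -(cardsID [set X : {set T} | x \in X] (P :&: cube K L)).
congr (_ + _); apply: eq_card => X; rewrite !inE.
  by rewrite andbA.
by rewrite andbC -andbA.
Qed.

Definition up_closed U := forall X Y, X \subset Y -> X \in U -> Y \in U.
Definition down_closed D := forall X Y, Y \subset X -> X \in D -> Y \in D.

Definition upclosure P := [set Y : {set T} | [exists X in P, X \subset Y]].
Definition downclosure P := [set Y : {set T} | [exists X in P, Y \subset X]].

Lemma upclosure_up_closed P : up_closed (upclosure P).
Proof.
move=> X Y XY; rewrite !inE => /exists_inP[Z ZP ZX].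
by apply/exists_inP; exists Z; rewrite // (subset_trans ZX XY).
Qed.

Lemma downclosure_down_closed P : down_closed (downclosure P).
Proof.
move=> X Y YX; rewrite !inE => /exists_inP[Z ZP XZ].
by apply/exists_inP; exists Z; rewrite // (subset_trans YX XZ).
Qed.

Lemma mem_upclosure P X : X \in P -> X \in upclosure P.
Proof. by move=> XP; rewrite inE; apply/exists_inP; exists X. Qed.

Lemma mem_downclosure P X : X \in P -> X \in downclosure P.
Proof. by move=> XP; rewrite inE; apply/exists_inP; exists X. Qed.

Lemma cardsI_cubeU1_up U K L x : up_closed U -> x \notin K -> L \subset K ->
  #|U :&: cube (x |: K) L| <= #|U :&: cube (x |: K) (x |: L)|.
Proof.
move=> upU xK LK; have xL : x \notin L by apply: contra xK; apply/subsetP.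
rewrite (cubeU1_notin xK xL) (cubeU1_in xK LK).
have injU : {in U :&: [set X in cube K L | x \notin X] &, injective (fun X => x |: X)}.
  move=> X Y; rewrite !inE => /and3P[_ _ xX] /and3P[_ _ xY] E.
  by rewrite -(setU1K xX) E setU1K.
rewrite -(card_in_imset injU); apply/subset_leq_card/subsetP => _ /imsetP[X + ->].
rewrite !inE => /and3P[XU XKL _].
by rewrite eqxx (upU X) ?subsetUr // setU1I // XKL.
Qed.

Lemma cardsI_cubeU1_down D K L x : down_closed D -> x \notin K -> L \subset K ->
  #|D :&: cube (x |: K) (x |: L)| <= #|D :&: cube (x |: K) L|.
Proof.
move=> downD xK LK; have xL : x \notin L by apply: contra xK; apply/subsetP.
rewrite (cubeU1_notin xK xL) (cubeU1_in xK LK).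
have injD : {in D :&: [set X in cube K L | x \in X] &, injective (fun X => X :\ x)}.
  move=> X Y; rewrite !inE => /and3P[_ _ xX] /and3P[_ _ xY] E.
  by rewrite -(setD1K xX) E setD1K.
rewrite -(card_in_imset injD); apply/subset_leq_card/subsetP => _ /imsetP[X + ->].
rewrite !inE => /and3P[XD XKL _].
by rewrite eqxx (downD X) ?subD1set // setD1I // XKL.
Qed.

Theorem harris_kleitman U D K L : up_closed U -> down_closed D -> L \subset K ->
  2 ^ #|~: K| * #|U :&: D :&: cube K L| <= #|U :&: cube K L| * #|D :&: cube K L|.
Proof.
move=> upU downD; move cardK: #|~: K| => k.
elim: k K L cardK => [|k IHk] K L cardK LK.
  have -> : K = setT by rewrite -(setCK K) (cards0_eq cardK) setC0.
  rewrite cube_setT !setI_set1 inE.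
  by case: (L \in U); case: (L \in D); rewrite ?cards1 ?cards0.
have [x xK] : exists x, x \in ~: K by apply/set0Pn; rewrite -card_gt0 cardK.
rewrite inE in xK.
have cardxK : #|~: (x |: K)| = k.
  by move: cardK; rewrite (cardsD1 x) !inE xK setCU setIC -setDE => -[].
have LxK : L \subset x |: K by rewrite subsetU ?LK ?orbT.
have xLxK : x |: L \subset x |: K by rewrite setUS.
rewrite !(cardsI_cubeU1 _ xK LK) expnS -mulnA mulnDr.
apply: leq_trans (chebyshev2 (cardsI_cubeU1_up upU xK LK)
                              (cardsI_cubeU1_down downD xK LK)).
by rewrite leq_mul2l leq_add ?IHk.
Qed.

End Subcube.

Lemma IU_setC_notin_closure n (G : {set {set 'I_n}}) F : IU_family G -> F \in G ->
  ~: F \notin upclosure G :|: downclosure G.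
Proof.
move=> IU_G FG; rewrite !inE negb_or; apply/andP; split; apply/exists_inP => -[X XG].
  have [/negP + _] := IU_G X F XG FG; apply: contra_not => XF.
  by rewrite setI_eq0 disjoints_subset.
have [_ /negP] := IU_G X F XG FG; apply: contra_not => FX.
by rewrite -subTset -(setUCr F) setUC setSU.
Qed.

Lemma sturdiness_le_cube n (F : {set {set 'I_n}}) i j : i != j ->
  sturdiness F <= #|F :&: cube [set i; j] [set i]|.
Proof.
move=> ij; have := bigminn_le_cond (P := fun p => p.1 != p.2)
  (fun p => #|section_ij F p.1 p.2|) (2 ^ n) (j := (i, j)) ij.
move/leq_trans; apply.
apply: leq_trans (leq_imset_card _ _) _.
by apply/eq_leq/eq_card => X; rewrite !inE.
Qed.

Lemma IU_cube_bound n (G : {set {set 'I_n}}) (K L : {set 'I_n}) :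
  IU_family G -> L \subset K ->
  16 * (#|G :&: cube K (K :\: L)| * #|G :&: cube K L|) <= (2 ^ #|~: K|) ^ 2.
Proof.
move=> IU_G LK; set N := 2 ^ #|~: K|; set Q := cube K L.
set U := upclosure G; set D := downclosure G.
set C := [set ~: F | F in G :&: cube K (K :\: L)].
have cardQ : #|Q| <= N by apply: card_cube_le.
have GQ_sub : G :&: Q \subset U :&: D :&: Q.
  apply/subsetP => X; rewrite !in_setI => /andP[XG ->].
  by rewrite mem_upclosure ?mem_downclosure.
have C_out : C \subset Q :\: (U :|: D).
  apply/subsetP => _ /imsetP[F + ->]; rewrite inE => /andP[FG /setC_cube].
  rewrite setDDr setDv set0U (setIidPr LK) => FQ.
  by rewrite in_setD FQ andbT IU_setC_notin_closure.
have room : #|C| + #|(U :|: D) :&: Q| <= N.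
  rewrite addnC; apply: leq_trans cardQ.
  by rewrite setIC -(cardsID (U :|: D) Q) leq_add2l subset_leq_card.
have incl_excl : #|(U :|: D) :&: Q| + #|U :&: D :&: Q| = #|U :&: Q| + #|D :&: Q|.
  by rewrite -(cardsUI (U :&: Q)) -setIUl setIACA setIid.
have HK : N * #|U :&: D :&: Q| <= #|U :&: Q| * #|D :&: Q|.
  apply: harris_kleitman LK; [exact: upclosure_up_closed | exact: downclosure_down_closed].
have := leq_16mul_sqr (expn_gt0 2 _) (leq_trans (subset_leq_card (subsetIr _ _)) cardQ)
  (leq_trans (subset_leq_card (subsetIr _ _)) cardQ) room incl_excl HK.
rewrite card_imset; last exact: setC_inj.
by apply: leq_trans; rewrite leq_mul2l leq_mul2l subset_leq_card ?orbT.
Qed.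

Theorem theorem1p3 (n : nat) (G : {set {set 'I_n}}) :
  2 <= n -> IU_family G -> 16 * sturdiness G <= 2 ^ n.
Proof.
move=> n2 IU_G.
pose i : 'I_n := Ordinal (ltnW n2); pose j : 'I_n := Ordinal n2.
have ij : i != j by [].
have cardK : #|~: [set i; j]| = n - 2.
  by have := cardsC [set i; j]; rewrite cards2 ij card_ord; lia.
have Kj : [set i; j] :\: [set i] = [set j].
  by rewrite setDUl setDv set0U; apply/setDidPl; rewrite disjoints1 inE.
have iK : [set i] \subset [set i; j] by rewrite sub1set setU11.
have := IU_cube_bound IU_G iK; rewrite Kj cardK => bound.
have b_ji : sturdiness G <= #|G :&: cube [set i; j] [set j]|.
  by rewrite setUC sturdiness_le_cube // eq_sym.
have : (4 * sturdiness G) ^ 2 <= (2 ^ (n - 2)) ^ 2.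
  apply: leq_trans bound; rewrite expnMn -[sturdiness G ^ 2]mulnn.
  exact: leq_mul (leqnn 16) (leq_mul b_ji (sturdiness_le_cube G ij)).
have -> : 2 ^ n = 2 ^ 2 * 2 ^ (n - 2) by rewrite -expnD subnKC.
by rewrite leq_sqr (_ : 16 = 2 ^ 2 * 4) // -mulnA leq_mul2l.
Qed.
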